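(* Let $D_{-}$ denote the difference operator $D_{-}F(z)=F(z)-F(z-1)$, applied coefficientwise to formal power series in the non-commuting variables $Y_1,Y_2,\ldots$ whose coefficients are meromorphic functions of $z$. Then the generating series $H(z)$ of Hurwitz polyzeta functions satisfies \[ D_{-}H(z)=-\sum_{k=1}^{\infty}\frac{Y_{k}}{(z-1)^{k}}\,H(z), \] i.e. $H(z)=H(z-1)-\sum_{k\ge 1}(z-1)^{-k}Y_kH(z)$ as an identity of formal power series (coefficient by coefficient).
   Context: For integers $k_1,\ldots,k_r\ge 1$ with $k_r\ge 2$, the Hurwitz polyzeta function is the meromorphic function of $z$ \[ \zeta(k_1,\ldots,k_r|z)=\sum_{0\le n_1<n_2<\cdots<n_r}\frac{1}{(z+n_1)^{k_1}\cdots(z+n_r)^{k_r}}. \] Let $\{y_j\}_{j\ge1}$ be non-commuting variables. The stuffle product on ${\mathbb Q}\langle y_1,y_2,\ldots\rangle$ is the bilinear product defined inductively by $1*w=w*1=w$ for the empty word $1$ and $y_kw*y_{k'}w'=y_k(w*y_{k'}w')+y_{k'}(y_kw*w')+y_{k+k'}(w*w')$. To a word $y_{k_1}\cdots y_{k_r}$ with $k_r\ge2$ associate $\zeta(y_{k_1}\cdots y_{k_r}|z):=\zeta(k_1,\ldots,k_r|z)$; set $\zeta(1|z)=\zeta(y_1|z):=-\Gamma'(z)/\Gamma(z)$, $\zeta(\text{empty word}|z)=1$, and extend $w\mapsto\zeta(w|z)$ to all words (in particular to words ending in $y_1$) as the homomorphism from the stuffle algebra to meromorphic functions of $z$ determined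 by these values. Let $\{Y_j\}_{j\ge1}$ be non-commuting formal variables, with $Y_{k_1}\cdots Y_{k_r}$ the word corresponding to $y_{k_1}\cdots y_{k_r}$, and define \[ H(z)=\sum_{w}\zeta(w|z)\,W, \] the sum over all words $w$ in the $y_j$ (including the empty word, with coefficient $1$), $W$ being the corresponding word in the $Y_j$. *)

From Stdlib Require Import Reals List.
From Coquelicot Require Import Coquelicot.
Import ListNotations.
Open Scope C_scope.

(* A word y_{k_1} ... y_{k_r} is the list [k_1; ...; k_r]; letters must be >= 1. *)
Definition word := list nat.
Definition valid_word (w : word) : Prop := List.Forall (fun k => (1 <= k)%nat) w.
Definition convergent_word (w : word) : Prop :=
  valid_word w /\ exists u k, w = u ++ [k] /\ (2 <= k)%nat.

Fixpoint csum (f : nat -> C) (N : nat) : C :=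
  match N with O => 0 | S n => csum f n + f n end.

(* Stuffle product, as the (multi)list of words, each with multiplicity one. *)
Fixpoint stuffle (u : word) : word -> list word :=
  match u with
  | [] => fun v => [v]
  | a :: u' =>
      fix st2 (v : word) : list word :=
        match v with
        | [] => [a :: u']
        | b :: v' =>
            map (cons a) (stuffle u' v) ++ map (cons b) (st2 v')
              ++ map (cons (a + b)%nat) (stuffle u' v')
        end
  end.

(* Truncated Hurwitz polyzeta sum, on the reversed word:
   part_rev [k_r; ...; k_1] z N = sum_{0 <= n_1 < ... < n_r < N} prod_j (z+n_j)^(-k_j). *)
Fixpoint part_rev (rw : word) (z : C) (N : nat) : C :=
  match rw with
  | [] => 1
  | k :: rw' => csum (fun n => part_rev rw' z n * / (z + RtoC (INR n)) ^ k) N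
  end.

Definition hurwitz_partial (w : word) (z : C) (N : nat) : C := part_rev (rev w) z N.

Definition not_pole (z : C) : Prop := forall n : nat, z <> RtoC (- INR n).

Definition euler_gamma : R :=
  real (Lim_seq (fun N => sum_f_R0 (fun k => / INR (S k))%R N - ln (INR (S N)))%R).

Definition is_digamma (z p : C) : Prop :=
  filterlim
    (fun N => RtoC (- euler_gamma)
              + csum (fun n => / RtoC (INR (S n)) - / (z + RtoC (INR n))) N)
    eventually (locally p).

Definition hurwitz_polyzeta (Z : word -> C -> C) : Prop :=
  (forall z, not_pole z -> Z [] z = 1) /\
  (forall z, not_pole z -> is_digamma z (- Z [1%nat] z)) /\
  (forall w z, convergent_word w -> not_pole z ->
     filterlim (hurwitz_partial w z) eventually (locally (Z w z))) /\
  (forall u v z, valid_word u -> valid_word v -> not_pole z ->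
     Z u z * Z v z = fold_right Cplus 0 (map (fun w => Z w z) (stuffle u v))).

(* Formal non-commutative series in Y_1, Y_2, ...: coefficient function on words. *)
Definition ncseries := word -> C.

Definition ser_mul (A B : ncseries) : ncseries :=
  fun w => csum (fun i => A (firstn i w) * B (skipn i w)) (S (length w)).

Definition Hser (Z : word -> C -> C) (z : C) : ncseries := fun w => Z w z.

Definition Yser (z : C) : ncseries :=
  fun w => match w with [k] => if Nat.leb 1 k then / (z - 1) ^ k else 0 | _ => 0 end.

Definition D_minus (F : C -> ncseries) (z : C) : ncseries :=
  fun w => F z w - F (z - 1) w.

From Stdlib Require Import Reals List Lia Lra.
From Coquelicot Require Import Coquelicot.
Import ListNotations.
Open Scope C_scope.

(* Both w |-> zeta(w|z-1) and the coefficients of (1 + sum_k (z-1)^-k Y_k) H(z) are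
   characters of the stuffle algebra: the first by definition, the second because
   1 + sum_k a^-k Y_k is group-like for the stuffle coproduct. A stuffle character is
   determined by its values on y_1 and on convergent words, because y_1 * v produces a
   word ending in y_1 plus words that are shorter or end in fewer letters y_1. On
   convergent words the two characters agree by splitting off the term n_1 = 0 of the
   series at z - 1, and on y_1 by the recurrence psi(z) = psi(z - 1) + 1/(z - 1). *)

(** * Stuffle characters *)

Definition wsum (f : word -> C) (l : list word) : C := fold_right Cplus 0 (map f l).

Lemma wsum_app f l1 l2 : wsum f (l1 ++ l2) = wsum f l1 + wsum f l2.
Proof. unfold wsum; induction l1 as [|x l1 IH]; simpl; [ring | rewrite IH; ring]. Qed.

Lemma wsum_map f g l : wsum f (map g l) = wsum (fun x => f (g x)) l.
Proof. unfold wsum; rewrite map_map; reflexivity. Qed.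

Lemma wsum_ext f g l : (forall x, f x = g x) -> wsum f l = wsum g l.
Proof. intros E; unfold wsum; induction l as [|x l IH]; simpl; [|rewrite E, IH]; reflexivity. Qed.

Lemma wsum_plus f g l : wsum (fun x => f x + g x) l = wsum f l + wsum g l.
Proof. unfold wsum; induction l as [|x l IH]; simpl; [ring | rewrite IH; ring]. Qed.

Lemma wsum_minus f g l : wsum (fun x => f x - g x) l = wsum f l - wsum g l.
Proof. unfold wsum; induction l as [|x l IH]; simpl; [ring | rewrite IH; ring]. Qed.

Lemma wsum_scal a f l : wsum (fun x => a * f x) l = a * wsum f l.
Proof. unfold wsum; induction l as [|x l IH]; simpl; [ring | rewrite IH; ring]. Qed.

Lemma stuffle_cons_cons a u b v : stuffle (a :: u) (b :: v) =
  map (cons a) (stuffle u (b :: v)) ++ map (cons b) (stuffle (a :: u) v)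
    ++ map (cons (a + b)%nat) (stuffle u v).
Proof. reflexivity. Qed.

Lemma wsum_stuffle_one_cons f b v : wsum f (stuffle [1%nat] (b :: v)) =
  f (1%nat :: b :: v) + wsum (fun x => f (b :: x)) (stuffle [1%nat] v) + f ((1 + b)%nat :: v).
Proof.
  change (wsum f (stuffle [1%nat] (b :: v))) with
    (f (1%nat :: b :: v) + wsum f (map (cons b) (stuffle [1%nat] v) ++ [(1 + b)%nat :: v])).
  rewrite wsum_app, wsum_map; unfold wsum at 2; simpl; ring.
Qed.

Lemma valid_word_app u v : valid_word u -> valid_word v -> valid_word (u ++ v).
Proof. intros; apply Forall_app; auto. Qed.

Lemma valid_word_app_inv u v : valid_word (u ++ v) -> valid_word u /\ valid_word v.
Proof. apply Forall_app. Qed.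

Lemma valid_word_ones t : valid_word (repeat 1%nat t).
Proof. apply Forall_forall; intros x Hx; apply repeat_spec in Hx; lia. Qed.

Lemma convergent_word_tail b v : convergent_word (b :: v) -> v <> [] -> convergent_word v.
Proof.
  intros [V [[|c u] [k [E Hk]]]] Hv; simpl in E; injection E as -> E.
  - contradiction.
  - split; [exact (Forall_inv_tail V) | now exists u, k].
Qed.

Lemma convergent_word_app p v :
  valid_word p -> convergent_word v -> convergent_word (p ++ v).
Proof.
  intros Vp [V [u [k [E Hk]]]]; split.
  - now apply valid_word_app.
  - exists (p ++ u), k; split; [rewrite E, app_assoc | ]; auto.
Qed.

Lemma valid_word_decomp w : valid_word w ->
  exists v t, (v = [] \/ convergent_word v) /\ w = v ++ repeat 1%nat t.
Proof.
  induction w as [|k w IH] using rev_ind; intros V.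
  - now exists [], 0%nat; split; [left|].
  - apply valid_word_app_inv in V as [Vw Vk]; pose proof (Forall_inv Vk) as Hk; cbn in Hk.
    destruct (Nat.eq_dec k 1) as [->|Hk1].
    + destruct (IH Vw) as [v [t [Hv ->]]].
      exists v, (S t); split; [exact Hv|].
      now rewrite <- app_assoc, <- repeat_cons.
    + exists (w ++ [k]), 0%nat; split; [right|now rewrite app_nil_r].
      split; [now apply valid_word_app | exists w, k; split; [reflexivity|lia]].
Qed.

Lemma Cmult_eq0_cancel_l (c x : C) : c <> 0 -> c * x = 0 -> x = 0.
Proof. intros Hc E; replace x with (/ c * (c * x)) by (field; exact Hc); rewrite E; ring. Qed.

Lemma RtoC_INR_S_neq_0 n : RtoC (INR (S n)) <> 0.
Proof.
  intros E; apply (f_equal Re) in E; rewrite re_RtoC in E.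
  revert E; apply not_0_INR; discriminate.
Qed.

Section StuffleOne.
Variables (D : word -> C) (m : nat).
Hypothesis D_length : forall x, valid_word x -> length x = m -> D x = 0.

Lemma wsum_stuffle_one_ones t : forall p, valid_word p -> (length p + t = m)%nat ->
  wsum (fun x => D (p ++ x)) (stuffle [1%nat] (repeat 1%nat t)) =
  RtoC (INR (S t)) * D (p ++ repeat 1%nat (S t)).
Proof.
  induction t as [|t IH]; intros p Vp Hp.
  - unfold wsum; simpl; ring.
  - change (repeat 1%nat (S t)) with (1%nat :: repeat 1%nat t).
    rewrite wsum_stuffle_one_cons, (D_length (p ++ (1 + 1)%nat :: repeat 1%nat t)).
    2: { apply valid_word_app; [exact Vp | constructor; [cbn; lia | apply valid_word_ones]]. }
    2: { rewrite length_app; simpl; rewrite repeat_length; lia. }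
    rewrite (wsum_ext _ (fun x => D ((p ++ [1%nat]) ++ x)))
      by (intros; now rewrite <- app_assoc).
    rewrite IH.
    2: { apply valid_word_app; [exact Vp | repeat constructor]. }
    2: { rewrite length_app; simpl; lia. }
    rewrite <- app_assoc, (S_INR (S t)), RtoC_plus; simpl; ring.
Qed.

(* Inserting the letter 1 inside a word with last letter >= 2 leaves a word of the
   same kind, merging shortens the word, so only the insertions into the final block
   of ones survive. *)
Lemma wsum_stuffle_one t : forall v p, valid_word p -> (v = [] \/ convergent_word v) ->
  (length p + length v + t = m)%nat ->
  (forall x, convergent_word x -> (length x + t = S m)%nat -> D (x ++ repeat 1%nat t) = 0) ->
  wsum (fun x => D (p ++ x)) (stuffle [1%nat] (v ++ repeat 1%nat t)) =
  RtoC (INR (S t)) * D (p ++ v ++ repeat 1%nat (S t)).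
Proof.
  induction v as [|b v IH]; intros p Vp Hv Hl Hconv.
  - apply wsum_stuffle_one_ones; [exact Vp | simpl in Hl; lia].
  - destruct Hv as [|Cbv]; [discriminate|].
    assert (Vbv : valid_word (b :: v)) by apply Cbv.
    pose proof (Forall_inv Vbv) as Hb; cbn in Hb.
    rewrite <- app_comm_cons, wsum_stuffle_one_cons,
      (D_length (p ++ (1 + b)%nat :: v ++ repeat 1%nat t)).
    2: { apply valid_word_app; [exact Vp|].
         constructor; [lia | apply valid_word_app; [exact (Forall_inv_tail Vbv) | apply valid_word_ones]]. }
    2: { rewrite length_app; simpl; rewrite length_app, repeat_length; simpl in Hl; lia. }
    replace (p ++ 1%nat :: b :: v ++ repeat 1%nat t)
      with ((p ++ 1%nat :: b :: v) ++ repeat 1%nat t) by now rewrite <- app_assoc.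
    rewrite Hconv.
    2: { change (1%nat :: b :: v) with ([1%nat] ++ b :: v); rewrite app_assoc.
         apply convergent_word_app; [apply valid_word_app; [exact Vp | repeat constructor] | exact Cbv]. }
    2: { rewrite length_app; simpl in *; lia. }
    rewrite (wsum_ext _ (fun x => D ((p ++ [b]) ++ x)))
      by (intros; now rewrite <- app_assoc).
    rewrite IH.
    + rewrite <- !app_assoc; simpl; ring.
    + apply valid_word_app; [exact Vp | now constructor].
    + destruct v as [|c v]; [now left | right; now apply (convergent_word_tail b)].
    + rewrite length_app; simpl in *; lia.
    + exact Hconv.
Qed.

End StuffleOne.

Lemma stuffle_one_vanishing (D : word -> C) :
  D [] = 0 ->
  (forall x, convergent_word x -> D x = 0) ->
  (forall v, valid_word v -> D v = 0 -> wsum D (stuffle [1%nat] v) = 0) ->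
  forall w, valid_word w -> D w = 0.
Proof.
  intros D_nil D_conv D_ideal.
  enough (H : forall n w, valid_word w -> length w = n -> D w = 0)
    by (intros w Vw; exact (H _ w Vw eq_refl)).
  induction n as [|m IHm]; intros w Vw Hw.
  { now destruct w. }
  assert (Hones : forall t v, (v = [] \/ convergent_word v) ->
            (length v + t = S m)%nat -> D (v ++ repeat 1%nat t) = 0).
  { induction t as [|t IHt]; intros v Hv Hl.
    - rewrite app_nil_r; destruct Hv as [->|Cv]; [discriminate | exact (D_conv v Cv)].
    - assert (Vv : valid_word v) by (destruct Hv as [->|Cv]; [constructor | apply Cv]).
      assert (Vvt := valid_word_app _ _ Vv (valid_word_ones t)).
      assert (Dvt : D (v ++ repeat 1%nat t) = 0).
      { apply IHm; [exact Vvt | rewrite length_app, repeat_length; lia]. }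
      pose proof (D_ideal _ Vvt Dvt) as Hsum.
      change (wsum (fun x => D ([] ++ x)) (stuffle [1%nat] (v ++ repeat 1%nat t)) = 0) in Hsum.
      rewrite (wsum_stuffle_one D m IHm t v [] (Forall_nil _) Hv ltac:(simpl; lia)
                  (fun x Cx => IHt x (or_intror Cx)))
        in Hsum.
      exact (Cmult_eq0_cancel_l _ _ (RtoC_INR_S_neq_0 t) Hsum). }
  destruct (valid_word_decomp w Vw) as [v [t [Hv ->]]].
  apply Hones; [exact Hv | now rewrite length_app, repeat_length in Hw].
Qed.

Definition stuffle_character (f : word -> C) : Prop :=
  f [] = 1 /\
  forall u v, valid_word u -> valid_word v -> f u * f v = wsum f (stuffle u v).

Lemma stuffle_character_unique f g :
  stuffle_character f -> stuffle_character g ->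
  f [1%nat] = g [1%nat] -> (forall x, convergent_word x -> f x = g x) ->
  forall w, valid_word w -> f w = g w.
Proof.
  intros [f_nil f_mul] [g_nil g_mul] E1 Econv w Vw.
  assert (Hv : forall v, f v - g v = 0 -> f v = g v).
  { intros v E; replace (f v) with (f v - g v + g v) by ring; rewrite E; ring. }
  apply Hv, (stuffle_one_vanishing (fun w => f w - g w)).
  - rewrite f_nil, g_nil; ring.
  - intros x Cx; rewrite (Econv x Cx); ring.
  - intros v Vv Dv.
    assert (V1 : valid_word [1%nat]) by repeat constructor.
    rewrite wsum_minus, <- (f_mul _ _ V1 Vv), <- (g_mul _ _ V1 Vv), E1, (Hv v Dv); ring.
  - exact Vw.
Qed.

(* [grouplike_mul a f] is the product (1 + sum_k a^-k Y_k) f of formal series. *)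
Definition grouplike_mul (a : C) (f : word -> C) (w : word) : C :=
  f w + match w with [] => 0 | k :: w' => / a ^ k * f w' end.

Lemma wsum_grouplike_mul_cons (a : C) f k L : wsum (grouplike_mul a f) (map (cons k) L) =
  wsum (fun x => f (k :: x)) L + / a ^ k * wsum f L.
Proof. rewrite wsum_map; unfold grouplike_mul; rewrite wsum_plus, wsum_scal; reflexivity. Qed.

Lemma grouplike_mul_character (a : C) (f : word -> C) :
  a <> 0 -> stuffle_character f -> stuffle_character (grouplike_mul a f).
Proof.
  intros Ha [f_nil f_mul]; split; [unfold grouplike_mul; rewrite f_nil; ring|].
  intros [|k u] [|l v] Vu Vv.
  - unfold wsum, grouplike_mul; simpl; rewrite f_nil; ring.
  - unfold wsum; simpl; unfold grouplike_mul at 1; rewrite f_nil; ring.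
  - unfold wsum; simpl; unfold grouplike_mul at 2; rewrite f_nil; ring.
  - pose proof (Forall_inv_tail Vu) as Vu'; pose proof (Forall_inv_tail Vv) as Vv'.
    rewrite stuffle_cons_cons, !wsum_app, !wsum_grouplike_mul_cons.
    rewrite <- (f_mul u (l :: v)), <- (f_mul (k :: u) v), <- (f_mul u v) by assumption.
    pose proof (f_mul _ _ Vu Vv) as Ekl.
    rewrite stuffle_cons_cons, !wsum_app, !wsum_map in Ekl.
    set (S1 := wsum (fun x => f (k :: x)) (stuffle u (l :: v))) in *.
    set (S2 := wsum (fun x => f (l :: x)) (stuffle (k :: u) v)) in *.
    set (S3 := wsum (fun x => f ((k + l)%nat :: x)) (stuffle u v)) in *.
    replace S3 with (f (k :: u) * f (l :: v) - S1 - S2) by (rewrite Ekl; ring).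
    unfold grouplike_mul; rewrite Cpow_add_r; field.
    split; apply Cpow_nz; exact Ha.
Qed.

(** * Finite sums and limits in C *)

Lemma filterlim_Cplus (f g : nat -> C) a b :
  filterlim f eventually (locally a) -> filterlim g eventually (locally b) ->
  filterlim (fun n => f n + g n) eventually (locally (a + b)).
Proof.
  intros Hf Hg; apply (filterlim_comp_2 f g (fun x y : C => plus x y) Hf Hg).
  apply (filterlim_plus (V := C_NormedModule)).
Qed.

Lemma filterlim_Cmult_l (f : nat -> C) c a :
  filterlim f eventually (locally a) ->
  filterlim (fun n => c * f n) eventually (locally (c * a)).
Proof.
  intros Hf; apply (filterlim_comp _ _ _ f (fun x : C => scal c x) _ _ _ Hf).
  apply (filterlim_scal_r (V := C_NormedModule)).
Qed.

Lemma filterlim_succ (f : nat -> C) a :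
  filterlim f eventually (locally a) ->
  filterlim (fun n => f (S n)) eventually (locally a).
Proof.
  intros Hf; apply (filterlim_comp _ _ _ S f eventually eventually); [|exact Hf].
  apply eventually_subseq; intros; lia.
Qed.

Lemma filterlim_C_unique (f : nat -> C) a b :
  filterlim f eventually (locally a) -> filterlim f eventually (locally b) -> a = b.
Proof.
  exact (@filterlim_locally_unique nat C_AbsRing C_NormedModule eventually
           (Proper_StrongProper _ eventually_filter) f a b).
Qed.

Lemma filterlim_inv_add_INR (w : C) :
  filterlim (fun n : nat => / (w + RtoC (INR n))) eventually (locally (RtoC 0)).
Proof.
  apply filterlim_locally; intros eps.
  destruct (INR_archimed 1 (Cmod w + / eps) Rlt_0_1) as [N0 HN0].
  rewrite Rmult_1_r in HN0.
  exists N0; intros n Hn; apply (norm_compat1 (V := C_NormedModule)).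
  assert (Hle : (INR N0 <= INR n)%R) by (apply le_INR; lia).
  assert (Hpe : (0 < / eps)%R) by (apply Rinv_0_lt_compat, cond_pos).
  assert (Htri : (INR n <= Cmod (w + RtoC (INR n)) + Cmod w)%R).
  { rewrite <- (Rabs_pos_eq (INR n)) at 1 by apply pos_INR; rewrite <- Cmod_R.
    replace (RtoC (INR n)) with ((w + RtoC (INR n)) + - w) at 1 by ring.
    rewrite <- (Cmod_opp w); apply Cmod_triangle. }
  assert (Hpos : (/ eps < Cmod (w + RtoC (INR n)))%R) by lra.
  assert (Hnz : w + RtoC (INR n) <> 0)
    by (intros E; rewrite E, Cmod_0 in Hpos; lra).
  change (Cmod (minus (Cinv (w + RtoC (INR n))) (RtoC 0)) < eps)%R.
  replace (minus (Cinv (w + RtoC (INR n))) (RtoC 0)) with (Cinv (w + RtoC (INR n)))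
    by (unfold minus, plus, opp; simpl; ring).
  rewrite Cmod_inv by exact Hnz.
  replace (pos eps) with (/ / eps)%R by (field; apply Rgt_not_eq, cond_pos).
  apply Rinv_lt_contravar; [apply Rmult_lt_0_compat|]; lra.
Qed.

Lemma csum_succ_l f N : csum f (S N) = f 0%nat + csum (fun n => f (S n)) N.
Proof. induction N as [|N IH]; simpl in *; [ring | rewrite IH; ring]. Qed.

Lemma csum_ext f g N : (forall n, f n = g n) -> csum f N = csum g N.
Proof. intros E; induction N as [|N IH]; simpl; [|rewrite IH, E]; reflexivity. Qed.

Lemma csum_eq_0 (f : nat -> C) N : (forall n, (n < N)%nat -> f n = 0) -> csum f N = 0.
Proof.
  induction N as [|N IH]; intros H; simpl; [reflexivity|].
  rewrite IH, (H N) by (intros; try apply H; lia); ring.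
Qed.

Lemma csum_plus f g N : csum (fun n => f n + g n) N = csum f N + csum g N.
Proof. induction N as [|N IH]; simpl; [ring | rewrite IH; ring]. Qed.

Lemma csum_minus f g N : csum (fun n => f n - g n) N = csum f N - csum g N.
Proof. induction N as [|N IH]; simpl; [ring | rewrite IH; ring]. Qed.

Lemma csum_scal a f N : csum (fun n => a * f n) N = a * csum f N.
Proof. induction N as [|N IH]; simpl; [ring | rewrite IH; ring]. Qed.

Lemma csum_telescope g N : csum (fun n => g n - g (S n)) N = g 0%nat - g N.
Proof. induction N as [|N IH]; simpl; [ring | rewrite IH; ring]. Qed.

(** * The Hurwitz polyzeta functions at z - 1 *)

Lemma pred_add_INR_S z n : z - 1 + RtoC (INR (S n)) = z + RtoC (INR n).
Proof. rewrite S_INR, RtoC_plus; ring. Qed.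

(* Split off the smallest index n = 0 at z - 1 and shift the others: (z - 1) + (n + 1) = z + n. *)
Lemma part_rev_pred z k : forall rw N,
  part_rev (rw ++ [k]) (z - 1) (S N) =
  part_rev (rw ++ [k]) z N + / (z - 1) ^ k * part_rev rw z N.
Proof.
  induction rw as [|j rw IH]; intros N.
  - cbn [app part_rev]; rewrite csum_succ_l.
    rewrite (csum_ext _ (fun n => 1 * / (z + RtoC (INR n)) ^ k))
      by (intros n; now rewrite pred_add_INR_S).
    replace (z - 1 + RtoC (INR 0)) with (z - 1) by (simpl; ring).
    ring.
  - cbn [app part_rev]; rewrite csum_succ_l.
    replace (part_rev (rw ++ [k]) (z - 1) 0) with (RtoC 0) by now destruct rw.
    rewrite (csum_ext _ (fun n => part_rev (rw ++ [k]) z n * / (z + RtoC (INR n)) ^ j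
                + / (z - 1) ^ k * (part_rev rw z n * / (z + RtoC (INR n)) ^ j)))
      by (intros n; rewrite pred_add_INR_S, IH; ring).
    rewrite csum_plus, csum_scal; ring.
Qed.

Lemma hurwitz_partial_pred z k w N :
  hurwitz_partial (k :: w) (z - 1) (S N) =
  hurwitz_partial (k :: w) z N + / (z - 1) ^ k * hurwitz_partial w z N.
Proof. apply part_rev_pred. Qed.

Lemma is_digamma_pred z p : is_digamma z p -> is_digamma (z - 1) (p - / (z - 1)).
Proof.
  unfold is_digamma; intros Hp.
  set (g := fun n : nat => / (z - 1 + RtoC (INR n))).
  assert (Hlim := filterlim_Cplus _ _ _ _
    (filterlim_Cplus _ _ _ _ Hp (filterlim_const (- g 0%nat))) (filterlim_inv_add_INR (z - 1))).
  assert (g0 : g 0%nat = / (z - 1)) by (unfold g; simpl; f_equal; ring).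
  replace (p - / (z - 1)) with (p + - g 0%nat + RtoC 0) by (rewrite g0; ring).
  eapply filterlim_ext; [|exact Hlim]; intros N; cbv beta.
  replace (csum (fun n => / RtoC (INR (S n)) - / (z - 1 + RtoC (INR n))) N)
    with (csum (fun n => / RtoC (INR (S n)) - / (z + RtoC (INR n))) N
          - csum (fun n => g n - g (S n)) N).
  - rewrite csum_telescope; fold (g N); ring.
  - rewrite <- csum_minus; apply csum_ext; intros n.
    unfold g; rewrite pred_add_INR_S; ring.
Qed.

Lemma not_pole_pred z : not_pole (z - 1) -> not_pole z.
Proof.
  intros H n E; apply (H (S n)); rewrite E, S_INR.
  apply injective_projections; simpl; ring.
Qed.

Lemma not_pole_neq_0 z : not_pole z -> z <> 0.
Proof. intros H E; apply (H 0%nat); rewrite E; simpl; now rewrite Ropp_0. Qed.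

Section HurwitzShift.
Variables (Z : word -> C -> C) (z : C).
Hypotheses (HZ : hurwitz_polyzeta Z) (Hz : not_pole (z - 1)).

Lemma hurwitz_character y : not_pole y -> stuffle_character (fun w => Z w y).
Proof.
  destruct HZ as [Z_nil [_ [_ Z_mul]]]; intros Hy; split; [now apply Z_nil|].
  intros u v Vu Vv; now apply Z_mul.
Qed.

Lemma hurwitz_convergent_pred w : convergent_word w ->
  Z w (z - 1) = grouplike_mul (z - 1) (fun w => Z w z) w.
Proof.
  destruct HZ as [Z_nil [_ [Z_lim _]]].
  assert (Hz' := not_pole_pred z Hz).
  intros Cw; destruct w as [|k w].
  { destruct Cw as [_ [[|] [? [E _]]]]; discriminate. }
  assert (Lw : filterlim (hurwitz_partial w z) eventually (locally (Z w z))).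
  { destruct w as [|b w].
    - rewrite (Z_nil z Hz'); exact (filterlim_const (RtoC 1)).
    - apply Z_lim; [now apply (convergent_word_tail k) | exact Hz']. }
  assert (L := filterlim_Cplus _ _ _ _ (Z_lim _ z Cw Hz') (filterlim_Cmult_l _ (/ (z - 1) ^ k) _ Lw)).
  apply (filterlim_C_unique (fun N => hurwitz_partial (k :: w) (z - 1) (S N))).
  - exact (filterlim_succ _ _ (Z_lim _ _ Cw Hz)).
  - eapply filterlim_ext; [|exact L]; intros N; now rewrite hurwitz_partial_pred.
Qed.

Lemma hurwitz_one_pred :
  Z [1%nat] (z - 1) = grouplike_mul (z - 1) (fun w => Z w z) [1%nat].
Proof.
  destruct HZ as [Z_nil [Z_psi _]].
  assert (Hz' := not_pole_pred z Hz).
  assert (E := filterlim_C_unique _ _ _ (Z_psi _ Hz) (is_digamma_pred _ _ (Z_psi _ Hz'))).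
  unfold grouplike_mul; rewrite (Z_nil z Hz'), Cpow_1_r.
  replace (Z [1%nat] (z - 1)) with (- - Z [1%nat] (z - 1)) by ring.
  rewrite E; ring.
Qed.

Lemma hurwitz_pred w : valid_word w ->
  Z w (z - 1) = grouplike_mul (z - 1) (fun w => Z w z) w.
Proof.
  revert w.
  apply (stuffle_character_unique (fun w => Z w (z - 1))).
  - exact (hurwitz_character _ Hz).
  - apply grouplike_mul_character; [exact (not_pole_neq_0 _ Hz)|].
    exact (hurwitz_character _ (not_pole_pred z Hz)).
  - exact hurwitz_one_pred.
  - exact hurwitz_convergent_pred.
Qed.

End HurwitzShift.

Lemma ser_mul_Yser_nil z A : ser_mul (Yser z) A [] = 0.
Proof. unfold ser_mul; simpl; ring. Qed.

Lemma ser_mul_Yser_cons z A k w : (1 <= k)%nat ->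
  ser_mul (Yser z) A (k :: w) = / (z - 1) ^ k * A w.
Proof.
  intros Hk; unfold ser_mul; simpl length; rewrite !csum_succ_l.
  rewrite csum_eq_0.
  - destruct k as [|k]; [lia|]; simpl; ring.
  - intros n Hn; destruct w as [|b w]; simpl in Hn; [lia | simpl; ring].
Qed.

Theorem theoremA (Z : word -> C -> C) :
  hurwitz_polyzeta Z ->
  forall z : C, not_pole (z - 1) ->
  forall w : word, valid_word w ->
    D_minus (Hser Z) z w = - ser_mul (Yser z) (Hser Z z) w.
Proof.
  intros HZ z Hz w Vw.
  unfold D_minus, Hser at 1 2; rewrite (hurwitz_pred Z z HZ Hz w Vw).
  unfold grouplike_mul; destruct w as [|k w].
  - rewrite ser_mul_Yser_nil; ring.
  - rewrite ser_mul_Yser_cons by exact (Forall_inv Vw); unfold Hser; ring.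
Qed.
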